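(* Every irreflexive relation $R\subseteq\Sigma^*\times\Sigma^*$ that is left synchronous, and every irreflexive relation that is right synchronous, has a rational asymmetric partition.
   Context: A transducer over a finite alphabet $\Sigma$ has finitely many states, transitions labelled $x/y$ with $x,y\in\Sigma\cup\{\lambda\}$ ($\lambda$ the empty word), initial and final states; it realizes the set of input/output label pairs of its accepting computations. A relation is rational if it is realized by some transducer. A transducer is letter-to-letter if all labels are $\sigma/\tau$ with $\sigma,\tau\in\Sigma$. The product of relations is $R_1R_2=\{u_1u_2/v_1v_2 : u_1/v_1\in R_1,\ u_2/v_2\in R_2\}$. $R$ is left synchronous if it is a finite union of relations each of the form $S(A\times\{\lambda\})$ or $S(\{\lambda\}\times A)$, where $A\subseteq\Sigma^*$ is regular and $S$ is realized by a letter-to-letter transducer; it is right synchronous if it is a finite union of relations of the form $(A\times\{\lambda\})S$ or $(\{\lambda\}\times A)S$. A relation is irreflexive if it contains no pair $u/u$; a relation $A$ is asymmetric if $x/y\in A$ implies $y/x\notin A$. A rational asymmetric partition of an irreflexive relation $I$ is a partition $\{A,B\}$ of $I$ into two asymmetric rational relations. *)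

From mathcomp Require Import all_boot.
Set Implicit Arguments. Unset Strict Implicit. Unset Printing Implicit Defensive.

Section Rational.
Variable Sigma : finType.

Definition word := seq Sigma.
Definition wrel := word -> word -> Prop.

(* lambda is None; a letter a is Some a *)
Definition olab (x : option Sigma) : word :=
  if x is Some a then [:: a] else [::].

Record transducer := Transducer {
  tnst : nat;
  ttrans : 'I_tnst -> option Sigma -> option Sigma -> 'I_tnst -> bool;
  tinit : 'I_tnst -> bool;
  tfinal : 'I_tnst -> bool }.

Unset Implicit Arguments.
Inductive trun (T : transducer) : 'I_(tnst T) -> word -> word -> 'I_(tnst T) -> Prop :=
| trun_nil p : trun T p [::] [::] p
| trun_step p x y q u v r :
    @ttrans T p x y q -> trun T q u v r -> trun T p (olab x ++ u) (olab y ++ v) r.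

Set Implicit Arguments.
Definition realized (T : transducer) : wrel :=
  fun u v => exists p q, [/\ @tinit T p, @tfinal T q & trun T p u v q].

Definition rel_eq (R1 R2 : wrel) := forall u v, R1 u v <-> R2 u v.

Definition rational (R : wrel) := exists T : transducer, rel_eq R (realized T).

Definition letter_to_letter (T : transducer) :=
  forall p x y q, @ttrans T p x y q -> exists a b, x = Some a /\ y = Some b.

Definition ltl_realized (S : wrel) :=
  exists T : transducer, letter_to_letter T /\ rel_eq S (realized T).

Record nfa := Nfa {
  anst : nat;
  atrans : 'I_anst -> Sigma -> 'I_anst -> bool;
  ainit : 'I_anst -> bool;
  afinal : 'I_anst -> bool }.

Unset Implicit Arguments.
Inductive arun (M : nfa) : 'I_(anst M) -> word -> 'I_(anst M) -> Prop :=
| arun_nil p : arun M p [::] p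
| arun_step p a q u r : @atrans M p a q -> arun M q u r -> arun M p (a :: u) r.

Set Implicit Arguments.
Definition accepted (M : nfa) (u : word) :=
  exists p q, [/\ @ainit M p, @afinal M q & arun M p u q].

Definition regular (A : word -> Prop) :=
  exists M : nfa, forall u, A u <-> accepted M u.

Definition rprod (R1 R2 : wrel) : wrel := fun u v =>
  exists u1 u2 v1 v2, [/\ u = u1 ++ u2, v = v1 ++ v2, R1 u1 v1 & R2 u2 v2].

Definition left_lam (A : word -> Prop) : wrel := fun u v => A u /\ v = [::].
Definition lam_right (A : word -> Prop) : wrel := fun u v => u = [::] /\ A v.

Definition finite_union_of (P : wrel -> Prop) (R : wrel) :=
  exists (n : nat) (Rs : 'I_n -> wrel),
    (forall i, P (Rs i)) /\ rel_eq R (fun u v => exists i, Rs i u v).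

Definition left_sync_piece (R : wrel) :=
  exists (S : wrel) (A : word -> Prop), [/\ ltl_realized S, regular A &
    (rel_eq R (rprod S (left_lam A)) \/ rel_eq R (rprod S (lam_right A)))].

Definition right_sync_piece (R : wrel) :=
  exists (S : wrel) (A : word -> Prop), [/\ ltl_realized S, regular A &
    (rel_eq R (rprod (left_lam A) S) \/ rel_eq R (rprod (lam_right A) S))].

Definition left_synchronous (R : wrel) := finite_union_of left_sync_piece R.
Definition right_synchronous (R : wrel) := finite_union_of right_sync_piece R.

Definition irreflexive_rel (R : wrel) := forall u, ~ R u u.
Definition asymmetric (A : wrel) := forall x y, A x y -> ~ A y x.

Definition rational_asymmetric_partition (I A B : wrel) :=
  [/\ rational A, rational B, asymmetric A, asymmetric B &
      ((forall u v, ~ (A u v /\ B u v)) /\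
       (forall u v, I u v <-> (A u v \/ B u v)))].

Definition has_rap (I : wrel) := exists A B, rational_asymmetric_partition I A B.

End Rational.

From mathcomp Require Import all_boot.
Set Implicit Arguments. Unset Strict Implicit. Unset Printing Implicit Defensive.

(* Fix a strict total order < on words.  For an irreflexive relation R, the
   pairs u/v of R with u < v and those with not (u < v) form a partition of R
   into two asymmetric relations; the whole point is to choose < so that both
   halves are rational.  Since rational relations are closed under finite
   unions, it suffices to split each piece S.(A x lambda) or S.(lambda x A)
   (S letter-to-letter, A regular) of a left synchronous relation.  On such a
   piece, the lexicographic order between u1u2 and v1v2 (|u1| = |v1|, one of
   u2, v2 empty, u1u2 <> v1v2) is decided by the first position where u1 and v1
   differ, which a letter-to-letter transducer can monitor with finite memory.
   For right synchronous pieces (A x lambda).S or (lambda x A).S the same works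
   with the reverse-lexicographic order, decided by the last difference. *)

Section AsymmetricPartitions.
Variable Sigma : finType.

Lemma rel_eq_trans (R1 R2 R3 : wrel Sigma) :
  rel_eq R1 R2 -> rel_eq R2 R3 -> rel_eq R1 R3.
Proof. by move=> H1 H2 u v; apply: iff_trans (H1 u v) (H2 u v). Qed.

Lemma rational_ext (R1 R2 : wrel Sigma) :
  rel_eq R1 R2 -> rational R2 -> rational R1.
Proof. by move=> H [T HT]; exists T; apply: rel_eq_trans HT. Qed.

(* Sums and products
   of state spaces are needed for the closure constructions below; such a
   transducer is turned back into one over 'I_n by enumerating its states. *)
Record ftrans := FTrans {
  fstate : finType;
  fstep : fstate -> option Sigma -> option Sigma -> fstate -> bool;
  finit : pred fstate;
  ffinal : pred fstate }.

Unset Implicit Arguments.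
Inductive frun (G : ftrans) : fstate G -> word Sigma -> word Sigma -> fstate G -> Prop :=
| frun_nil p : frun G p [::] [::] p
| frun_step p x y q u v r :
    @fstep G p x y q -> frun G q u v r -> frun G p (olab x ++ u) (olab y ++ v) r.
Set Implicit Arguments.
Arguments frun_nil {G} p.
Arguments frun_step {G} p x y q u v r.

Definition frel (G : ftrans) : wrel Sigma :=
  fun u v => exists p q, [/\ finit p, ffinal q & frun G p u v q].

Lemma frun_morph (G1 G2 : ftrans) (f : fstate G1 -> fstate G2) :
  (forall p x y q, @fstep G1 p x y q -> @fstep G2 (f p) x y (f q)) ->
  forall p u v q, frun G1 p u v q -> frun G2 (f p) u v (f q).
Proof.
move=> Hf p u v q; elim=> [p0|p0 x y q0 u0 v0 r0 Ht _ IH]; first exact: frun_nil.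
exact: frun_step (Hf _ _ _ _ Ht) IH.
Qed.

Lemma frun_cat (G : ftrans) p u v q u' v' r :
  frun G p u v q -> frun G q u' v' r -> frun G p (u ++ u') (v ++ v') r.
Proof.
elim=> [//|p0 x y q0 u0 v0 r0 Ht _ IH] H.
by rewrite -!catA; apply: frun_step Ht (IH H).
Qed.

Definition ftrans_of (T : transducer Sigma) : ftrans :=
  @FTrans (ordinal (tnst T)) (@ttrans _ T) (@tinit _ T) (@tfinal _ T).

Lemma trunP (T : transducer Sigma) p u v q :
  trun Sigma T p u v q <-> frun (ftrans_of T) p u v q.
Proof.
split; elim=> [p0|p0 x y q0 u0 v0 r0 Ht _ IH].
- exact: frun_nil.
- exact: (@frun_step (ftrans_of T)) IH.
- exact: trun_nil.
- exact: trun_step IH.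
Qed.

Lemma realized_ftrans_of (T : transducer Sigma) :
  rel_eq (realized T) (frel (ftrans_of T)).
Proof.
by move=> u v; split; case=> p [q [Hp Hq Hr]]; exists p, q; split => //; apply/trunP.
Qed.

Definition transducer_of (G : ftrans) : transducer Sigma :=
  @Transducer Sigma #|fstate G| (fun p x y q => fstep (enum_val p) x y (enum_val q))
    (fun p => finit (enum_val p)) (fun p => ffinal (enum_val p)).

Lemma realized_transducer_of (G : ftrans) :
  rel_eq (realized (transducer_of G)) (frel G).
Proof.
move=> u v; split.
- case=> p [q [Hp Hq /trunP Hr]]; exists (enum_val p), (enum_val q); split => //.
  exact: frun_morph Hr.
- case=> p [q [Hp Hq Hr]]; exists (enum_rank p), (enum_rank q).
  rewrite /= !enum_rankK; split => //; apply/trunP.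
  by apply: frun_morph Hr => p0 x y q0; rewrite /= !enum_rankK.
Qed.

Lemma rationalP (R : wrel Sigma) : rational R <-> exists G, rel_eq R (frel G).
Proof.
split.
- by case=> T HT; exists (ftrans_of T); apply: rel_eq_trans HT (realized_ftrans_of T).
- case=> G HG; exists (transducer_of G).
  by apply: rel_eq_trans HG _ => u v; apply: iff_sym; apply: realized_transducer_of.
Qed.

(* The disjoint sum of two transducers, with lambda/lambda transitions from
   state p of G1 to state q of G2 whenever bridge p q; both union (no bridge)
   and product (bridges from final to initial states) are instances. *)
Section Closure.
Variables G1 G2 : ftrans.

Definition sum_pred (P1 : pred (fstate G1)) (P2 : pred (fstate G2)) :
  pred (fstate G1 + fstate G2) :=
  fun s => match s with inl p => P1 p | inr q => P2 q end.

Definition fsum (bridge : fstate G1 -> fstate G2 -> bool)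
    (i f : pred (fstate G1 + fstate G2)) : ftrans :=
  @FTrans (fstate G1 + fstate G2)%type
    (fun s x y t => match s, t with
       | inl p, inl q => fstep p x y q
       | inr p, inr q => fstep p x y q
       | inl p, inr q => [&& x == None, y == None & bridge p q]
       | inr _, inl _ => false end) i f.

Variables (bridge : fstate G1 -> fstate G2 -> bool) (i f : pred (fstate G1 + fstate G2)).
Let S := fsum bridge i f.

Lemma fsum_run_inv s0 u v t0 : frun S s0 u v t0 ->
  match s0, t0 with
  | inl p, inl q => frun G1 p u v q
  | inr p, inr q => frun G2 p u v q
  | inl p, inr q => exists p' q' u1 u2 v1 v2,
      [/\ u = u1 ++ u2, v = v1 ++ v2, frun G1 p u1 v1 p', bridge p' q' & frun G2 q' u2 v2 q]
  | inr _, inl _ => False end.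
Proof.
elim=> [[p|p]|s x y s' u0 v0 t Ht _ IH]; try exact: frun_nil.
case: s s' t Ht IH => [p|p] [q|q] [r|r] //= Ht IH; try exact: frun_step Ht IH.
- case: IH => p' [q' [u1 [u2 [v1 [v2 [-> -> H1 Hb H2]]]]]].
  exists p', q', (olab x ++ u1), u2, (olab y ++ v1), v2; rewrite !catA.
  by split => //; apply: frun_step Ht H1.
- case/and3P: Ht => /eqP -> /eqP -> Hb.
  by exists p, q, [::], u0, [::], v0; split => //; apply: frun_nil.
Qed.

Lemma fsum_run_inl p u v q : frun G1 p u v q -> frun S (inl p) u v (inl q).
Proof. exact: (@frun_morph G1 S inl). Qed.

Lemma fsum_run_inr p u v q : frun G2 p u v q -> frun S (inr p) u v (inr q).
Proof. exact: (@frun_morph G2 S inr). Qed.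

End Closure.

Definition funion (G1 G2 : ftrans) : ftrans :=
  @fsum G1 G2 (fun _ _ => false) (sum_pred (@finit G1) (@finit G2))
    (sum_pred (@ffinal G1) (@ffinal G2)).

Definition fconcat (G1 G2 : ftrans) : ftrans :=
  @fsum G1 G2 (fun p q => ffinal p && finit q) (sum_pred (@finit G1) pred0)
    (sum_pred pred0 (@ffinal G2)).

Lemma frel_union (G1 G2 : ftrans) :
  rel_eq (frel (funion G1 G2)) (fun u v => frel G1 u v \/ frel G2 u v).
Proof.
move=> u v; split.
- case=> [[p|p] [[q|q] [Hp Hq /fsum_run_inv Hr]]] //.
  + by left; exists p, q.
  + by case: Hr => ? [? [? [? [? [? []]]]]].
  + by right; exists p, q.
- case=> [[p [q [Hp Hq Hr]]]|[p [q [Hp Hq Hr]]]].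
  + by exists (inl p), (inl q); split => //; apply: fsum_run_inl.
  + by exists (inr p), (inr q); split => //; apply: fsum_run_inr.
Qed.

Lemma frel_concat (G1 G2 : ftrans) :
  rel_eq (frel (fconcat G1 G2)) (rprod (frel G1) (frel G2)).
Proof.
move=> u v; split.
- case=> [[p|p] [[q|q] [Hp Hq /fsum_run_inv Hr]]] //.
  case: Hr => p' [q' [u1 [u2 [v1 [v2 [-> -> H1 /andP [Hp' Hq'] H2]]]]]].
  by exists u1, u2, v1, v2; split; [| | exists p, p' | exists q', q].
- case=> u1 [u2 [v1 [v2 [-> -> [p [p' [Hp Hp' H1]]] [q' [q [Hq' Hq H2]]]]]]].
  exists (inl p), (inr q); split => //.
  apply: frun_cat (fsum_run_inl _ _ _ H1) _.
  apply: (@frun_step (fconcat G1 G2) (inl p') None None (inr q')).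
    by rewrite /= Hp' Hq'.
  exact: fsum_run_inr.
Qed.

Lemma rational_union (R1 R2 : wrel Sigma) : rational R1 -> rational R2 ->
  rational (fun u v => R1 u v \/ R2 u v).
Proof.
move=> /rationalP [G1 H1] /rationalP [G2 H2]; apply/rationalP.
exists (funion G1 G2) => u v; move: (frel_union G1 G2 u v) (H1 u v) (H2 u v); tauto.
Qed.

Lemma rational_rprod (R1 R2 : wrel Sigma) : rational R1 -> rational R2 ->
  rational (rprod R1 R2).
Proof.
move=> /rationalP [G1 H1] /rationalP [G2 H2]; apply/rationalP.
exists (fconcat G1 G2); apply: rel_eq_trans (fun u v => iff_sym (frel_concat G1 G2 u v)).
move=> u v; split; case=> u1 [u2 [v1 [v2 [-> -> Ha Hb]]]];
  exists u1, u2, v1, v2; split => //; by [apply/H1 | apply/H2].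
Qed.

Lemma rational_empty : rational (fun _ _ : word Sigma => False).
Proof.
apply/rationalP; exists (@FTrans void (fun _ _ _ _ => false) pred0 pred0).
by move=> u v; split => // [[[]]].
Qed.

Lemma rational_bigunion n (Rs : 'I_n -> wrel Sigma) :
  (forall i, rational (Rs i)) -> rational (fun u v => exists i, Rs i u v).
Proof.
elim: n Rs => [|n IH] Rs HRs.
  by apply: rational_ext rational_empty => u v; split => // [[[]]].
have HU := rational_union (HRs ord0) (IH (fun i => Rs (lift ord0 i)) (fun i => HRs _)).
apply: rational_ext HU => u v; split.
- by case=> i; case: (unliftP ord0 i) => [j ->|->]; [right; exists j | left].
- by case=> [H0|[j Hj]]; [exists ord0 | exists (lift ord0 j)].
Qed.

Definition fswap (G : ftrans) : ftrans :=
  @FTrans (fstate G) (fun p x y q => fstep p y x q) (@finit G) (@ffinal G).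

Lemma fswap_run (G : ftrans) p u v q : frun G p u v q -> frun (fswap G) p v u q.
Proof.
elim=> [p0|p0 x y q0 u0 v0 r0 Ht _ IH]; first exact: frun_nil.
exact: (@frun_step (fswap G) p0 y x q0) IH.
Qed.

Lemma rational_swap (R : wrel Sigma) : rational R -> rational (fun u v => R v u).
Proof.
move=> /rationalP [G HG]; apply/rationalP; exists (fswap G) => u v.
apply: iff_trans (HG v u) _.
split; case=> p [q [Hp Hq Hr]]; exists p, q; split => //; first exact: fswap_run.
exact: (@frun_morph (fswap (fswap G)) G id) (fswap_run Hr).
Qed.

Definition fnfa (M : nfa Sigma) : ftrans :=
  @FTrans (ordinal (anst M))
    (fun p x y q => if (x, y) is (Some a, None) then atrans p a q else false)
    (@ainit _ M) (@afinal _ M).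

Lemma fnfa_run_inv (M : nfa Sigma) p u v q :
  frun (fnfa M) p u v q -> v = [::] /\ arun Sigma M p u q.
Proof.
elim=> [p0|p0 [a|] [b|] q0 u0 v0 r0 Ht _ [-> IH]] //; first by split; constructor.
by split => //; apply: arun_step Ht IH.
Qed.

Lemma fnfa_run (M : nfa Sigma) p u q :
  arun Sigma M p u q -> frun (fnfa M) p u [::] q.
Proof.
elim=> [p0|p0 a q0 u0 r0 Ht _ IH]; first exact: frun_nil.
exact: (@frun_step (fnfa M) p0 (Some a) None q0 u0 [::]) IH.
Qed.

Lemma rational_left_lam (A : word Sigma -> Prop) : regular A -> rational (left_lam A).
Proof.
case=> M HM; apply/rationalP; exists (fnfa M) => u v; split.
- by case=> /HM [p [q [Hp Hq Hr]]] ->; exists p, q; split => //; apply: fnfa_run.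
- by case=> p [q [Hp Hq /fnfa_run_inv [-> Hr]]]; split => //; apply/HM; exists p, q.
Qed.

Lemma rational_lam_right (A : word Sigma -> Prop) : regular A -> rational (lam_right A).
Proof.
move=> /rational_left_lam /rational_swap; apply: rational_ext.
by move=> u v; split; case.
Qed.

Fixpoint pairfold (D : Type) (step : D -> Sigma -> Sigma -> D) (d : D)
    (u v : word Sigma) : D :=
  if (u, v) is (a :: u', b :: v') then pairfold step (step d a b) u' v' else d.

Lemma pairfold_cat (D : Type) (step : D -> Sigma -> Sigma -> D) d u1 v1 u2 v2 :
  size u1 = size v1 ->
  pairfold step d (u1 ++ u2) (v1 ++ v2) = pairfold step (pairfold step d u1 v1) u2 v2.
Proof. by elim: u1 v1 d => [|a u1 IH] [|b v1] d //= [/IH]. Qed.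

Definition fltl (G : ftrans) :=
  forall p x y q, @fstep G p x y q -> exists a b, x = Some a /\ y = Some b.

Section Monitor.
Variables (G : ftrans) (D : finType) (step : D -> Sigma -> Sigma -> D) (d0 : D).
Variable F : pred D.

Definition fmonitor : ftrans :=
  @FTrans (fstate G * D)%type
    (fun s x y t => fstep s.1 x y t.1 &&
       if (x, y) is (Some a, Some b) then t.2 == step s.2 a b else false)
    (fun s => finit s.1 && (s.2 == d0)) (fun s => ffinal s.1 && F s.2).

Lemma fmonitor_run_inv s u v t : frun fmonitor s u v t ->
  frun G s.1 u v t.1 /\ t.2 = pairfold step s.2 u v.
Proof.
elim=> [s0|s0 [a|] [b|] t0 u0 v0 r0 /andP [Ht] //= /eqP -> _ [IH ->]].
  by split => //; apply: frun_nil.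
by split => //; apply: frun_step Ht IH.
Qed.

Lemma fmonitor_run p u v q : fltl G -> frun G p u v q ->
  forall d, frun fmonitor (p, d) u v (q, pairfold step d u v).
Proof.
move=> Hl; elim=> [p0|p0 x y q0 u0 v0 r0 Ht _ IH] d; first exact: frun_nil.
have [a [b [Ex Ey]]] := Hl _ _ _ _ Ht; subst x y.
by apply: (@frun_step fmonitor (p0, d) _ _ (q0, step d a b)) (IH _); rewrite /= Ht eqxx.
Qed.

Lemma frel_monitor : fltl G ->
  rel_eq (frel fmonitor) (fun u v => frel G u v /\ F (pairfold step d0 u v)).
Proof.
move=> Hl u v; split.
- case=> [[p d] [[q d'] [/andP [Hp /eqP /= Ed] /andP [Hq HF] /fmonitor_run_inv]]].
  by rewrite /= Ed => -[Hr Ed']; rewrite -Ed'; split => //; exists p, q.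
- case=> [[p [q [Hp Hq Hr]]] HF].
  exists (p, d0), (q, pairfold step d0 u v); rewrite /= Hp Hq HF eqxx.
  by split => //; apply: fmonitor_run.
Qed.

End Monitor.

Lemma fltl_size (G : ftrans) p u v q : fltl G -> frun G p u v q -> size u = size v.
Proof.
move=> Hl; elim=> [//|p0 x y q0 u0 v0 r0 Ht _ IH].
by have [a [b [-> ->]]] := Hl _ _ _ _ Ht; rewrite /= IH.
Qed.

Lemma ltl_size (S : wrel Sigma) u v : ltl_realized S -> S u v -> size u = size v.
Proof.
case=> T [Hl HS] /HS [p [q [_ _ /trunP Hr]]].
by apply: fltl_size Hr => p0 x y q0; apply: Hl.
Qed.

Lemma rational_monitor (S : wrel Sigma) (D : finType) (step : D -> Sigma -> Sigma -> D)
    (d0 : D) (F : pred D) :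
  ltl_realized S -> rational (fun u v => S u v /\ F (pairfold step d0 u v)).
Proof.
case=> T [Hl HS]; apply/rationalP; exists (fmonitor (ftrans_of T) step d0 F).
have Hl' : fltl (ftrans_of T) by move=> p x y q; apply: Hl.
move=> u v; move: (frel_monitor step d0 F Hl' u v) (HS u v) (realized_ftrans_of T u v).
tauto.
Qed.

Definition letter_lt (a b : Sigma) := (enum_rank a < enum_rank b)%N.

Fixpoint lexlt (u v : word Sigma) : bool :=
  match u, v with
  | [::], _ :: _ => true
  | a :: u', b :: v' => if a == b then lexlt u' v' else letter_lt a b
  | _, _ => false
  end.

Lemma lexlt_asym u v : lexlt u v -> ~~ lexlt v u.
Proof.
elim: u v => [|a u IH] [|b v] //=; rewrite [b == a]eq_sym.
by case: eqP => [_|_]; [apply: IH | rewrite /letter_lt -leqNgt; apply: ltnW].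
Qed.

Lemma lexlt_total u v : u != v -> lexlt u v || lexlt v u.
Proof.
elim: u v => [|a u IH] [|b v] //=; rewrite eqseq_cons [b == a]eq_sym.
case: eqP => [_|/eqP ne _]; first exact: IH.
by rewrite /letter_lt -neq_ltn (inj_eq (@ord_inj _)) (inj_eq enum_rank_inj).
Qed.

(* For words of equal length, first_diff u v records whether u is smaller at
   the first position where u and v differ (None if u = v); last_diff records
   the same at the last differing position. *)
Definition first_step (c : option bool) (a b : Sigma) :=
  if c is Some _ then c else if a == b then None else Some (letter_lt a b).
Definition last_step (c : option bool) (a b : Sigma) :=
  if a == b then c else Some (letter_lt a b).

Definition first_diff := pairfold first_step None.
Definition last_diff := pairfold last_step None.

Lemma pairfold_first_Some x u v : pairfold first_step (Some x) u v = Some x.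
Proof. by elim: u v => [|a u IH] [|b v] //=. Qed.

Lemma lexlt_cat u1 v1 u2 v2 : size u1 = size v1 ->
  lexlt (u1 ++ u2) (v1 ++ v2) =
  if first_diff u1 v1 is Some b then b else lexlt u2 v2.
Proof.
rewrite /first_diff; elim: u1 v1 => [|a u1 IH] [|b v1] //= [/IH].
by rewrite /first_step; case: (a == b) => // _; rewrite pairfold_first_Some.
Qed.

Lemma first_diff_None u v : size u = size v -> first_diff u v = None -> u = v.
Proof.
rewrite /first_diff; elim: u v => [|a u IH] [|b v] //= [/IH {}IH].
by rewrite /first_step; case: eqP => [-> /IH ->|_]; rewrite ?pairfold_first_Some.
Qed.

Lemma lexlt_left_lam u1 v1 u2 : size u1 = size v1 ->
  lexlt (u1 ++ u2) v1 = (first_diff u1 v1 == Some true).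
Proof.
move=> Hs; rewrite -[in lexlt _ _](cats0 v1) lexlt_cat //.
by case: (first_diff u1 v1) => [[]|]; case: u2.
Qed.

Lemma lexlt_lam_right u1 v1 v2 : size u1 = size v1 -> u1 != v1 ++ v2 ->
  lexlt u1 (v1 ++ v2) = (first_diff u1 v1 != Some false).
Proof.
move=> Hs; rewrite -[in lexlt _ _](cats0 u1) lexlt_cat //.
case E: (first_diff u1 v1) => [[]|] //; rewrite (first_diff_None Hs E).
by case: v2; rewrite ?cats0 ?eqxx.
Qed.

Lemma pairfold_last c u v : size u = size v ->
  pairfold last_step c u v = if last_diff u v is Some x then Some x else c.
Proof.
rewrite /last_diff; elim: u v c => [|a u IH] [|b v] c //= [Hs].
rewrite (IH v (last_step c a b)) // (IH v (last_step None a b)) // /last_step.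
by case: (a == b); case: (pairfold last_step None u v).
Qed.

Lemma last_diff_rev u v : size u = size v -> last_diff u v = first_diff (rev u) (rev v).
Proof.
elim: u v => [|a u IH] [|b v] // [Hs].
rewrite !rev_cons -!cats1 /first_diff pairfold_cat ?size_rev // -/(first_diff _ _) -IH //.
rewrite {1}/last_diff /= pairfold_last //.
by case: (last_diff u v).
Qed.

Definition rlexlt (u v : word Sigma) := lexlt (rev u) (rev v).

Lemma rlexlt_left_lam u1 v1 u2 : size u1 = size v1 ->
  rlexlt (u2 ++ u1) v1 = (last_diff u1 v1 == Some true).
Proof.
by move=> Hs; rewrite /rlexlt rev_cat lexlt_left_lam ?size_rev // last_diff_rev.
Qed.

Lemma rlexlt_lam_right u1 v1 v2 : size u1 = size v1 -> u1 != v2 ++ v1 ->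
  rlexlt u1 (v2 ++ v1) = (last_diff u1 v1 != Some false).
Proof.
move=> Hs Hne; rewrite /rlexlt rev_cat lexlt_lam_right ?size_rev ?last_diff_rev //.
by rewrite -rev_cat (can_eq revK).
Qed.

Lemma rlexlt_asym u v : rlexlt u v -> ~~ rlexlt v u.
Proof. exact: lexlt_asym. Qed.

Lemma rlexlt_total u v : u != v -> rlexlt u v || rlexlt v u.
Proof. by move=> ne; apply: lexlt_total; rewrite (can_eq revK). Qed.

Lemma rprod_guard (R1 R2 : wrel Sigma) (K1 K2 Q : word Sigma -> word Sigma -> bool) :
  irreflexive_rel (rprod R1 R2) ->
  (forall u1 v1 u2 v2, R1 u1 v1 -> R2 u2 v2 -> u1 ++ u2 != v1 ++ v2 ->
     Q (u1 ++ u2) (v1 ++ v2) = K1 u1 v1 && K2 u2 v2) ->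
  rel_eq (fun u v => rprod R1 R2 u v /\ Q u v)
         (rprod (fun u v => R1 u v /\ K1 u v) (fun u v => R2 u v /\ K2 u v)).
Proof.
move=> Hirr HQ u v.
have Hne u1 v1 u2 v2 : R1 u1 v1 -> R2 u2 v2 -> u1 ++ u2 != v1 ++ v2.
  move=> H1 H2; apply/eqP => E; apply: (Hirr (u1 ++ u2)).
  by exists u1, u2, v1, v2; rewrite -E.
split.
- case=> -[u1 [u2 [v1 [v2 [-> -> H1 H2]]]]].
  rewrite HQ ?Hne // => /andP [K1u K2u]; by exists u1, u2, v1, v2.
- case=> u1 [u2 [v1 [v2 [-> -> [H1 K1u] [H2 K2u]]]]].
  by split; [exists u1, u2, v1, v2 | rewrite HQ ?Hne ?K1u].
Qed.

Section MonitoredSplit.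
Variables (P S X : wrel Sigma) (D : finType) (step : D -> Sigma -> Sigma -> D) (d0 : D).
Hypotheses (HS : ltl_realized S) (HX : rational X) (Hirr : irreflexive_rel P).

Let rational_X_true : rational (fun u v => X u v /\ true).
Proof. by apply: rational_ext HX => u v; split => [[]|]. Qed.

Lemma split_left_monitored (F : pred D) (Q : word Sigma -> word Sigma -> bool) :
  rel_eq P (rprod S X) ->
  (forall u1 v1 u2 v2, S u1 v1 -> X u2 v2 -> u1 ++ u2 != v1 ++ v2 ->
     Q (u1 ++ u2) (v1 ++ v2) = F (pairfold step d0 u1 v1)) ->
  rational (fun u v => P u v /\ Q u v) /\ rational (fun u v => P u v /\ ~~ Q u v).
Proof.
move=> HP HQ; have HirrSX : irreflexive_rel (rprod S X) by move=> u /HP /Hirr.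
have guarded (F' : pred D) (Q' : word Sigma -> word Sigma -> bool) :
    (forall u1 v1 u2 v2, S u1 v1 -> X u2 v2 -> u1 ++ u2 != v1 ++ v2 ->
       Q' (u1 ++ u2) (v1 ++ v2) = F' (pairfold step d0 u1 v1) && true) ->
    rational (fun u v => P u v /\ Q' u v).
  move=> HQ'; apply: rational_ext (rational_rprod (rational_monitor step d0 F' HS) rational_X_true).
  move=> u v; move: (HP u v) (rprod_guard HirrSX HQ' u v); tauto.
split; [apply: (guarded F) | apply: (guarded (predC F))];
  by move=> u1 v1 u2 v2 H1 H2 Hne; rewrite andbT /= HQ.
Qed.

Lemma split_right_monitored (F : pred D) (Q : word Sigma -> word Sigma -> bool) :
  rel_eq P (rprod X S) ->
  (forall u1 v1 u2 v2, S u1 v1 -> X u2 v2 -> u2 ++ u1 != v2 ++ v1 ->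
     Q (u2 ++ u1) (v2 ++ v1) = F (pairfold step d0 u1 v1)) ->
  rational (fun u v => P u v /\ Q u v) /\ rational (fun u v => P u v /\ ~~ Q u v).
Proof.
move=> HP HQ; have HirrXS : irreflexive_rel (rprod X S) by move=> u /HP /Hirr.
have guarded (F' : pred D) (Q' : word Sigma -> word Sigma -> bool) :
    (forall u2 v2 u1 v1, X u2 v2 -> S u1 v1 -> u2 ++ u1 != v2 ++ v1 ->
       Q' (u2 ++ u1) (v2 ++ v1) = true && F' (pairfold step d0 u1 v1)) ->
    rational (fun u v => P u v /\ Q' u v).
  move=> HQ'; apply: rational_ext (rational_rprod rational_X_true (rational_monitor step d0 F' HS)).
  move=> u v; move: (HP u v) (rprod_guard HirrXS HQ' u v); tauto.
split; [apply: (guarded F) | apply: (guarded (predC F))];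
  by move=> u2 v2 u1 v1 H2 H1 Hne; rewrite /= HQ.
Qed.

End MonitoredSplit.

Lemma left_piece_split (P : wrel Sigma) : left_sync_piece P -> irreflexive_rel P ->
  rational (fun u v => P u v /\ lexlt u v) /\ rational (fun u v => P u v /\ ~~ lexlt u v).
Proof.
case=> S [A [HS HA [HP|HP]]] Hirr; have Hsz := fun u v => @ltl_size S u v HS.
- apply: (split_left_monitored (step := first_step) (d0 := None) (F := pred1 (Some true))
    HS (rational_left_lam HA) Hirr HP).
  by move=> u1 v1 u2 v2 /Hsz Hs [_ ->] _; rewrite cats0 lexlt_left_lam.
- apply: (split_left_monitored (step := first_step) (d0 := None) (F := [pred c | c != Some false])
    HS (rational_lam_right HA) Hirr HP).
  by move=> u1 v1 u2 v2 /Hsz Hs [-> _]; rewrite cats0; apply: lexlt_lam_right.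
Qed.

Lemma right_piece_split (P : wrel Sigma) : right_sync_piece P -> irreflexive_rel P ->
  rational (fun u v => P u v /\ rlexlt u v) /\ rational (fun u v => P u v /\ ~~ rlexlt u v).
Proof.
case=> S [A [HS HA [HP|HP]]] Hirr; have Hsz := fun u v => @ltl_size S u v HS.
- apply: (split_right_monitored (step := last_step) (d0 := None) (F := pred1 (Some true))
    HS (rational_left_lam HA) Hirr HP).
  by move=> u1 v1 u2 v2 /Hsz Hs [_ ->] _; rewrite cat0s rlexlt_left_lam.
- apply: (split_right_monitored (step := last_step) (d0 := None) (F := [pred c | c != Some false])
    HS (rational_lam_right HA) Hirr HP).
  by move=> u1 v1 u2 v2 /Hsz Hs [-> _]; rewrite cat0s; apply: rlexlt_lam_right.
Qed.

Lemma rap_of_strict_total (R : wrel Sigma) (lt : word Sigma -> word Sigma -> bool) :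
  (forall u v, lt u v -> ~~ lt v u) -> (forall u v, u != v -> lt u v || lt v u) ->
  irreflexive_rel R ->
  rational (fun u v => R u v /\ lt u v) -> rational (fun u v => R u v /\ ~~ lt u v) ->
  has_rap R.
Proof.
move=> Hasym Htot Hirr HA HB.
exists (fun u v => R u v /\ lt u v), (fun u v => R u v /\ ~~ lt u v).
split => //; last split.
- by move=> u v [_ Huv] [_ Hvu]; move: (Hasym _ _ Huv); rewrite Hvu.
- move=> u v [Ruv Huv] [_ Hvu].
  have /Htot : u != v by apply/eqP => E; subst v; apply: (Hirr u).
  by rewrite (negbTE Huv) (negbTE Hvu).
- by move=> u v [[_ ->] []].
- by move=> u v; split => [Ruv | [[]|[]] //]; case E: (lt u v); [left | right].
Qed.

Lemma has_rap_of_pieces (Piece : wrel Sigma -> Prop) (lt : word Sigma -> word Sigma -> bool)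
    (R : wrel Sigma) :
  (forall u v, lt u v -> ~~ lt v u) -> (forall u v, u != v -> lt u v || lt v u) ->
  (forall P, Piece P -> irreflexive_rel P ->
     rational (fun u v => P u v /\ lt u v) /\ rational (fun u v => P u v /\ ~~ lt u v)) ->
  irreflexive_rel R -> finite_union_of Piece R -> has_rap R.
Proof.
move=> Hasym Htot Hsplit Hirr [n [Rs [HRs HR]]].
have Hirri i : irreflexive_rel (Rs i) by move=> u Hu; apply: (Hirr u); apply/HR; exists i.
have union_guard (Q : word Sigma -> word Sigma -> Prop) :
    (forall i, rational (fun u v => Rs i u v /\ Q u v)) -> rational (fun u v => R u v /\ Q u v).
  move=> HQ; apply: rational_ext (rational_bigunion HQ) => u v; split.
  - by case=> /HR [i Hi] Hq; exists i.
  - by case=> i [Hi Hq]; split => //; apply/HR; exists i.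
apply: rap_of_strict_total Hasym Htot Hirr _ _; apply: union_guard => i.
- exact: (Hsplit _ (HRs i) (Hirri i)).1.
- exact: (Hsplit _ (HRs i) (Hirri i)).2.
Qed.

End AsymmetricPartitions.

Theorem corollary1 (Sigma : finType) (R : wrel Sigma) :
  irreflexive_rel R ->
  (left_synchronous R \/ right_synchronous R) ->
  has_rap R.
Proof.
move=> Hirr [Hleft | Hright].
- exact: has_rap_of_pieces (@lexlt_asym _) (@lexlt_total _) (@left_piece_split _) Hirr Hleft.
- exact: has_rap_of_pieces (@rlexlt_asym _) (@rlexlt_total _) (@right_piece_split _) Hirr Hright.
Qed.
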